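(* Let $\mathbb{K}$ be a field of characteristic different from $2$, with algebraic closure $\overline{\mathbb{K}}$. (a) If $\lambda = \alpha+\beta\in\overline{\mathbb{K}}$ with $\alpha\in\mathbb{K}$, $\beta\in Ker(H_\mathbb{K})$, has degree $2$ over $\mathbb{K}$, then the unique conjugate of $\lambda$ over $\mathbb{K}$ (other than $\lambda$) is its $\mathbb{K}$-involution $\overline{\lambda}=\alpha-\beta$. (b) If $\theta_1,\dots,\theta_l\in\overline{\mathbb{K}}$ are algebraic over $\mathbb{K}$ of degree at most $2$, then $\mathbb{K}(\theta_1,\dots,\theta_l)\subseteq\mathcal{R}_\mathbb{K}$ and $\overline{\theta_1+\cdots+\theta_l} = \overline{\theta_1}+\cdots+\overline{\theta_l}$. (c) If $\lambda\in\overline{\mathbb{K}}$ has degree at most $2$ over $\mathbb{K}$, then $\overline{xy}=\overline{x}\,\overline{y}$ for all $x,y\in\mathbb{K}(\lambda)$. (d) If $\beta,\beta'\in Ker(H_\mathbb{K})$ have degree $2$ over $\mathbb{K}$, then $\beta\beta'\in\mathbb{K}$ if and only if $\beta,\beta'$ are linearly dependent over $\mathbb{K}$; otherwise $\beta\beta'$ has degree $2$ over $\mathbb{K}$ and belongs to $Ker(H_\mathbb{K})$. (e) If $\beta\in\overline{\mathbb{K}}$ has degree $2$ over $\mathbb{K}$, then $\beta\in Ker(H_\mathbb{K})$ if and only if $\beta\notin\mathbb{K}$ and $\beta^2\in\mathbb{K}$.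
   Context: An element of $\overline{\mathbb{K}}$ is $\mathbb{K}$-regular if its degree over $\mathbb{K}$ is not a multiple of $char(\mathbb{K})$; $\mathcal{R}_\mathbb{K}$ is the set of such elements. For $\lambda\in\mathcal{R}_\mathbb{K}$ with monic minimal polynomial $X^d + a_{d-1}X^{d-1}+\cdots+a_0$ over $\mathbb{K}$, $H_\mathbb{K}(\lambda) = -a_{d-1}/d\in\mathbb{K}$, $V_\mathbb{K}(\lambda)=\lambda-H_\mathbb{K}(\lambda)$, and $Ker(H_\mathbb{K})=\{\lambda\in\mathcal{R}_\mathbb{K}: H_\mathbb{K}(\lambda)=0\}$. Every $\lambda\in\mathcal{R}_\mathbb{K}$ is uniquely $\lambda=\alpha+\beta$ with $\alpha\in\mathbb{K}$, $\beta\in Ker(H_\mathbb{K})$ (namely $\alpha=H_\mathbb{K}(\lambda)$, $\beta=V_\mathbb{K}(\lambda)$); the $\mathbb{K}$-involution of $\lambda$ is $\overline{\lambda}=\alpha-\beta$. *)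

From HB Require Import structures.
From mathcomp Require Import all_boot all_order all_algebra.
From Stdlib Require Import ClassicalEpsilon.
Set Implicit Arguments. Unset Strict Implicit. Unset Printing Implicit Defensive.
Import Order.TTheory GRing.Theory Num.Theory.
Local Open Scope ring_scope.

(* The base field K is [F]; its algebraic closure is modelled by an
   algebraically closed field [L] with an embedding [iota : F -> L] such that
   every element of [L] is algebraic over [iota F] (hypothesis of the theorem). *)

Section Defs.
Variables (F : fieldType) (L : closedFieldType) (iota : {rmorphism F -> L}).

Definition inK (x : L) : Prop := exists a : F, x = iota a.

Definition is_minpoly (p : {poly F}) (x : L) : Prop :=
  [/\ p \is monic, root (map_poly iota p) x &
      forall q : {poly F}, root (map_poly iota q) x -> p %| q].

(* the minimal polynomial of x over K (chosen; unique when x is algebraic) *)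
Definition minpolyK (x : L) : {poly F} :=
  epsilon (inhabits 0) (fun p => is_minpoly p x).

Definition degK (x : L) : nat := (size (minpolyK x)).-1.

(* K-regular: degree not a multiple of char K, i.e. (deg x)%:R <> 0 in K *)
Definition regularK (x : L) : Prop := (degK x)%:R != 0 :> F.

Definition HK (x : L) : F := - (minpolyK x)`_(degK x).-1 / (degK x)%:R.

Definition VK (x : L) : L := x - iota (HK x).

Definition inKerH (x : L) : Prop := regularK x /\ HK x = 0.

Definition kinv (x : L) : L := iota (HK x) - VK x.

Definition subfield_over (S : L -> Prop) : Prop :=
  [/\ forall a : F, S (iota a),
      forall x y, S x -> S y -> S (x + y),
      forall x, S x -> S (- x),
      forall x y, S x -> S y -> S (x * y) &
      forall x, S x -> S (x^-1)].

Definition in_gen_field (ts : seq L) (x : L) : Prop :=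
  forall S : L -> Prop, subfield_over S -> (forall t, t \in ts -> S t) -> S x.

Definition lin_dep2 (b b' : L) : Prop :=
  exists a a' : F, (a != 0 \/ a' != 0) /\ iota a * b + iota a' * b' = 0.

End Defs.

(* An element lam of degree 2 over K is h + v with h = H_K(lam) and v^2 = c in
   K; its minimal polynomial is (X - h)^2 - c, and (a), (c), (d) and (e) are
   computations with this polynomial.  For (b), adjoining theta_1, ..., theta_l one at a time
   gives a finite extension E of K of degree 2^m embedded in the algebraic
   closure.  The characteristic polynomial of multiplication by e in E is a
   power mu^k of the minimal polynomial mu of e; hence [E : K] = k deg(e), so
   deg(e) divides 2^m and e is K-regular, and Tr_{E/K}(e) = [E : K] H_K(e), so
   H_K, and with it the K-involution, is additive on E. *)

From HB Require Import structures.
From mathcomp Require Import all_boot all_order all_algebra all_field.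
From Stdlib Require Import ClassicalEpsilon.
From mathcomp Require Import zify ring.
Set Implicit Arguments. Unset Strict Implicit. Unset Printing Implicit Defensive.
Import Order.TTheory GRing.Theory Num.Theory.
Local Open Scope ring_scope.

Section Subleading.
Variable R : idomainType.
Implicit Types p q : {poly R}.

Definition subleading p : R := p`_(size p).-2.

Lemma monic_splitXn p k : p \is monic -> size p = k.+2 ->
  exists2 p1 : {poly R}, p = 'X^(k.+1) + p1 & (size p1 <= k.+1)%N.
Proof.
move=> p_monic size_p; exists (p - 'X^(k.+1)); first by rewrite addrC subrK.
apply/leq_sizeP => j le_kj; rewrite coefB coefXn.
have [-> | ne_jk] := eqVneq j k.+1.
  by move: p_monic; rewrite monicE lead_coefE size_p => /eqP->; rewrite subrr.
by rewrite subr0 nth_default // size_p; move: le_kj ne_jk; lia.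
Qed.

Lemma subleadingM p q : p \is monic -> q \is monic ->
  (1 < size p)%N -> (1 < size q)%N -> subleading (p * q) = subleading p + subleading q.
Proof.
move=> p_monic q_monic; rewrite /subleading size_monicM ?monic_neq0 //.
case Ep : (size p) => [|[|m]] // _; case Eq : (size q) => [|[|l]] // _.
have [p1 -> size_p1] := monic_splitXn p_monic Ep.
have [q1 -> size_q1] := monic_splitXn q_monic Eq.
(* Only the cross terms X^(m+1) q1 and p1 X^(l+1) contribute in degree m + l + 1. *)
have -> : (m.+2 + l.+2).-1.-2 = (m + l + 1)%N by lia.
rewrite mulrDl !mulrDr -exprD !coefD coefXn coefXnM coefMXn.
rewrite [(p1 * q1)`_ _]nth_default; last by apply: leq_trans (size_polyMleq _ _) _; lia.
rewrite !ifF; try by apply/negbTE; lia.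
rewrite !coefXn /= !ltn_eqF ?ltnSn //; last lia.
rewrite (_ : m + l + 1 - m.+1 = l)%N; last lia.
rewrite (_ : m + l + 1 - l.+1 = m)%N; last lia.
by rewrite addr0 !add0r addrC.
Qed.

Lemma subleadingX p k : p \is monic -> (1 < size p)%N ->
  subleading (p ^+ k.+1) = k.+1%:R * subleading p.
Proof.
move=> p_monic size_p; elim: k => [|k IHk]; first by rewrite expr1 mul1r.
have size_pk : (1 < size (p ^+ k.+1))%N.
  by move: (size_exp p k.+1) size_p; lia.
by rewrite exprSr subleadingM ?monic_exp // IHk -[k.+2]addn1 natrD mulrDl mul1r.
Qed.

End Subleading.

Section RegularRepresentation.
Variables (F : fieldType) (E : fieldExtType F) (n : nat).
Variables (f : E -> 'rV[F]_n.+1) (g : 'rV[F]_n.+1 -> E).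
Hypotheses (f_linear : linear f) (fK : cancel f g) (gK : cancel g f).

Definition mulr_rV (e : E) (r : 'rV[F]_n.+1) : 'rV[F]_n.+1 := f (g r * e).

Let f_sub : {morph f : x y / x - y}.
Proof. by move=> x y; rewrite -scaleN1r addrC f_linear scaleN1r addrC. Qed.

Let f_scale c : {morph f : x / c *: x}.
Proof.
have f0 : f 0 = 0 by rewrite -(subrr (0 : E)) f_sub subrr.
by move=> x; rewrite -[c *: x]addr0 f_linear f0 addr0.
Qed.

Let g_linear : linear g.
Proof. by move=> a u v; apply: (can_inj fK); rewrite f_linear !gK. Qed.

Fact mulr_rV_is_linear e : linear (mulr_rV e).
Proof. by move=> a u v; rewrite /mulr_rV g_linear mulrDl -scalerAl f_linear. Qed.

HB.instance Definition _ e := GRing.isSemilinear.Build F _ _ _ (mulr_rV e)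
  (GRing.semilinear_linear (mulr_rV_is_linear e)).

Definition regmx (e : E) : 'M[F]_n.+1 := lin1_mx (mulr_rV e).

Lemma mul_regmx u e : u *m regmx e = f (g u * e).
Proof. exact: mul_rV_lin1. Qed.

Fact regmx_is_zmod_morphism : zmod_morphism regmx.
Proof.
move=> a b; apply/eqP/mulmxP => u.
by rewrite mulmxBr !mul_regmx mulrBr f_sub.
Qed.

HB.instance Definition _ := GRing.isZmodMorphism.Build E 'M[F]_n.+1 regmx
  regmx_is_zmod_morphism.

Fact regmx_is_monoid_morphism : monoid_morphism regmx.
Proof.
split=> [|a b]; apply/eqP/mulmxP => u; first by rewrite mul_regmx mulr1 gK mulmx1.
by rewrite -mulmxE mulmxA !mul_regmx fK mulrA.
Qed.

HB.instance Definition _ := GRing.isMonoidMorphism.Build E 'M[F]_n.+1 regmx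
  regmx_is_monoid_morphism.

Lemma regmx_alg c : regmx c%:A = c%:M.
Proof.
apply/eqP/mulmxP => u.
by rewrite mul_regmx mul_mx_scalar mulr_algr f_scale gK.
Qed.

Lemma horner_regmx (p : {poly F}) e :
  horner_mx (regmx e) p = regmx (map_poly (in_alg E) p).[e].
Proof.
rewrite -horner_map -map_poly_comp /horner_mx /horner_morph.
by congr (_.[_]); apply: eq_map_poly => c; rewrite /= regmx_alg.
Qed.

End RegularRepresentation.

Section AlgebraicClosure.
Variables (F : fieldType) (L : closedFieldType) (iota : {rmorphism F -> L}).

Local Notation "p ^i" := (map_poly iota p) (at level 2, format "p ^i").

Lemma irreducible_pow_of_roots (chi mu : {poly F}) :
  chi \is monic -> mu \is monic -> irreducible_poly mu ->
  (forall z, root chi^i z -> root mu^i z) -> exists k, chi = mu ^+ k.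
Proof.
move=> + mu_monic mu_irr; have [size_mu _] := mu_irr.
elim: {chi}(size chi) {-2}chi (leqnn (size chi)) => [|n IHn] chi size_chi chi_monic chi_mu.
  by move: (monic_neq0 chi_monic); rewrite -size_poly_eq0 -leqn0 size_chi.
have [chi1 | chi_n1] := eqVneq (size chi) 1%N.
  exists 0%N; move/eqP/size_poly1P: chi1 => [c _ chiE].
  by move: chi_monic; rewrite chiE monicE lead_coefC expr0 => /eqP->.
have [z chi_z] : exists z, root chi^i z by apply/closed_rootP; rewrite size_map_poly.
have mu_dvd_chi : mu %| chi.
  have : size (gcdp mu chi) != 1%N.
    rewrite -(size_map_poly iota) gcdp_map; apply/closed_rootP.
    by exists z; rewrite root_gcd chi_mu.
  by move/(mu_irr.2 _)/(_ (dvdp_gcdl _ _))/eqp_dvdl <-; apply: dvdp_gcdr.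
have chiE : chi = chi %/ mu * mu by apply/eqP; rewrite -dvdp_eq.
have quo_monic : chi %/ mu \is monic by rewrite -(monicMr _ mu_monic) -chiE.
have [k quoE] : exists k, chi %/ mu = mu ^+ k.
  apply: IHn => // [|z' quo_z']; last by apply: chi_mu; rewrite chiE rmorphM rootM quo_z'.
  rewrite size_divp ?monic_neq0 // leq_subLR (leq_trans size_chi) //.
  by rewrite -add1n leq_add2r ltn_predRL.
by exists k.+1; rewrite chiE quoE exprSr.
Qed.

Hypothesis Lalg : forall x : L, exists p : {poly F}, p != 0 /\ root (map_poly iota p) x.

Lemma root_map_modp (p q : {poly F}) x :
  root p^i x -> root q^i x -> root (q %% p)^i x.
Proof.
move=> /rootP px0; rewrite {1}(divp_eq q p) rmorphD rmorphM /= rootE !hornerE.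
by rewrite px0 mulr0 add0r.
Qed.

Lemma minpolyK_exists x : exists p, is_minpoly iota p x.
Proof.
have [p0 [p0_neq0 p0x]] := Lalg x.
elim: {p0}(size p0) {-2}p0 (leqnn (size p0)) p0_neq0 p0x => [|n IHn] p.
  by rewrite leqn0 size_poly_eq0 => /eqP->; rewrite eqxx.
move=> size_p p_neq0 px.
have [p_min | /not_all_ex_not[q]] := classic (forall q, root q^i x -> p %| q).
  exists ((lead_coef p)^-1 *: p); split.
  - by rewrite monicE lead_coefZ mulVf ?lead_coef_eq0.
  - by rewrite map_polyZ rootE hornerZ (rootP px) mulr0.
  - by move=> q /p_min; rewrite dvdpZl // invr_eq0 lead_coef_eq0.
move=> /(imply_to_and (root q^i x)) [qx /negP p_ndvd_q].
apply: (IHn (q %% p)); last exact: root_map_modp.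
  by rewrite -ltnS (leq_trans _ size_p) // ltn_modp.
by apply: contra p_ndvd_q => /eqP/modp_eq0P.
Qed.

Lemma minpolyKP x : is_minpoly iota (minpolyK iota x) x.
Proof. exact: epsilon_spec (minpolyK_exists x). Qed.

Lemma minpolyK_monic x : minpolyK iota x \is monic.
Proof. by case: (minpolyKP x). Qed.

Lemma root_minpolyK x : root (minpolyK iota x)^i x.
Proof. by case: (minpolyKP x). Qed.

Lemma minpolyK_dvdp x q : root q^i x -> minpolyK iota x %| q.
Proof. by case: (minpolyKP x) => _ _; apply. Qed.

Lemma minpolyK_eq p x : is_minpoly iota p x -> minpolyK iota x = p.
Proof.
case=> p_monic px p_min; apply/eqP.
rewrite -eqp_monic ?minpolyK_monic // /eqp minpolyK_dvdp //=.
by rewrite p_min // root_minpolyK.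
Qed.

Lemma size_minpolyK_gt1 x : (1 < size (minpolyK iota x))%N.
Proof.
have := root_minpolyK x; rewrite -(size_map_poly iota) => /root_size_gt1.
by rewrite map_poly_eq0 monic_neq0 ?minpolyK_monic //; apply.
Qed.

Lemma size_minpolyK x : size (minpolyK iota x) = (degK iota x).+1.
Proof. by rewrite /degK prednK // ltnW // size_minpolyK_gt1. Qed.

Lemma degK_gt0 x : (0 < degK iota x)%N.
Proof. by rewrite -ltnS -size_minpolyK size_minpolyK_gt1. Qed.

Lemma minpolyK_irreducible x : irreducible_poly (minpolyK iota x).
Proof.
split=> [|q size_q_neq1 /dvdpP[r def_mu]]; first exact: size_minpolyK_gt1.
have [r_neq0 q_neq0] : r != 0 /\ q != 0.
  by apply/norP; rewrite -mulf_eq0 -def_mu monic_neq0 ?minpolyK_monic.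
have := root_minpolyK x; rewrite def_mu rmorphM rootM => /orP[rx | qx].
  have := dvdp_leq r_neq0 (minpolyK_dvdp rx); rewrite def_mu size_mul //.
  move: size_q_neq1 (size_poly_gt0 q) (size_poly_gt0 r); rewrite q_neq0 r_neq0.
  lia.
by rewrite /eqp dvdp_mulIr -def_mu minpolyK_dvdp.
Qed.

Lemma minpolyK_iota a : minpolyK iota (iota a) = 'X - a%:P.
Proof.
apply: minpolyK_eq; split; first exact: monicXsubC.
  by rewrite rmorphB /= map_polyX map_polyC /= root_XsubC.
by move=> q; rewrite /root horner_map fmorph_eq0 => qa; rewrite dvdp_XsubCl.
Qed.

Lemma degK_iota a : degK iota (iota a) = 1%N.
Proof. by rewrite /degK minpolyK_iota size_XsubC. Qed.

Lemma HK_iota a : HK iota (iota a) = a.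
Proof.
by rewrite /HK degK_iota minpolyK_iota coefB coefX coefC sub0r opprK divr1.
Qed.

Lemma kinv_iota a : kinv iota (iota a) = iota a.
Proof. by rewrite /kinv /VK HK_iota subrr subr0. Qed.

Lemma degK_eq1 x : degK iota x = 1%N <-> inK iota x.
Proof.
split=> [deg1 | [a ->]]; last exact: degK_iota.
have size_mu : size (minpolyK iota x) = 2%N by rewrite size_minpolyK deg1.
have [a mu_a] := poly2_root size_mu.
have mu_Xa : minpolyK iota x = 'X - a%:P.
  apply/eqP; rewrite -eqp_monic ?minpolyK_monic ?monicXsubC //.
  by rewrite eqp_sym -dvdp_size_eqp ?dvdp_XsubCl // size_XsubC size_mu.
have := root_minpolyK x; rewrite mu_Xa rmorphB /= map_polyX map_polyC /=.
by rewrite root_XsubC => /eqP->; exists a.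
Qed.

Lemma subfield_over_inK : subfield_over iota (inK iota).
Proof.
split.
- by move=> a; exists a.
- by move=> _ _ [a ->] [b ->]; exists (a + b); rewrite rmorphD.
- by move=> _ [a ->]; exists (- a); rewrite rmorphN.
- by move=> _ _ [a ->] [b ->]; exists (a * b); rewrite rmorphM.
- by move=> _ [a ->]; exists a^-1; rewrite fmorphV.
Qed.

Definition quad_poly (h c : F) : {poly F} := ('X - h%:P) ^+ 2 - c%:P.

Lemma coef_quad_poly h c i : (quad_poly h c)`_i =
  if i == 0%N then h ^+ 2 - c else if i == 1%N then - h *+ 2
  else if i == 2%N then 1 else 0.
Proof. by rewrite /quad_poly sqrrB !coefE; case: i => [|[|[|i]]] /=; ring. Qed.

Lemma size_quad_poly h c : size (quad_poly h c) = 3%N.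
Proof.
rewrite /quad_poly size_addl ?size_exp_XsubC // size_opp.
exact: leq_ltn_trans (size_polyC_leq1 c) _.
Qed.

Lemma quad_poly_monic h c : quad_poly h c \is monic.
Proof. by rewrite monicE lead_coefE size_quad_poly coef_quad_poly. Qed.

Lemma root_quad_poly h c y : root (quad_poly h c)^i y = ((y - iota h) ^+ 2 == iota c).
Proof.
rewrite /root /quad_poly rmorphB rmorphXn rmorphB /= map_polyX !map_polyC /=.
by rewrite !hornerE subr_eq0.
Qed.

Lemma minpolyK_quad y h c :
  ~ inK iota y -> (y - iota h) ^+ 2 = iota c -> minpolyK iota y = quad_poly h c.
Proof.
move=> yNK yh2; have mu_dvd : minpolyK iota y %| quad_poly h c.
  by apply: minpolyK_dvdp; rewrite root_quad_poly yh2.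
apply/eqP; rewrite -eqp_monic ?minpolyK_monic ?quad_poly_monic //.
rewrite -dvdp_size_eqp // size_quad_poly size_minpolyK eqSS.
have := dvdp_leq (monic_neq0 (quad_poly_monic h c)) mu_dvd.
rewrite size_quad_poly size_minpolyK ltnS leq_eqVlt => /orP[// | ].
have := degK_gt0 y; case: (degK iota y) (degK_eq1 y) => [|[|]] // [deg1 _] _ _.
by case: yNK; apply: deg1.
Qed.

Hypothesis char_neq2 : (2%:R : F) != 0.

Lemma degK_HK_quad y h c : ~ inK iota y -> (y - iota h) ^+ 2 = iota c ->
  degK iota y = 2%N /\ HK iota y = h.
Proof.
move=> yNK yh2; rewrite /HK /degK (minpolyK_quad yNK yh2) size_quad_poly.
by rewrite coef_quad_poly /= mulNrn opprK -[h *+ 2]mulr_natr mulfK.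
Qed.

Lemma degK2_square x : degK iota x = 2%N ->
  ~ inK iota x /\ exists c, (x - iota (HK iota x)) ^+ 2 = iota c.
Proof.
move=> deg2; split=> [/degK_eq1 | ]; first by rewrite deg2.
set mu := minpolyK iota x; set h := HK iota x.
have mu_quad : mu = quad_poly h (h ^+ 2 - mu`_0).
  have mu2 : mu`_2 = 1.
    by have := minpolyK_monic x; rewrite monicE lead_coefE size_minpolyK deg2 => /eqP.
  apply/polyP=> i; rewrite coef_quad_poly; case: i => [|[|[|i]]] /=.
  - by ring.
  - by rewrite /h /HK deg2 /=; field.
  - by [].
  - by rewrite nth_default // size_minpolyK deg2.
exists (h ^+ 2 - mu`_0); apply/eqP; rewrite -root_quad_poly -mu_quad.
exact: root_minpolyK.
Qed.

Lemma root_quad_polyP h c v y : v ^+ 2 = iota c ->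
  root (quad_poly h c)^i y = (y == iota h + v) || (y == iota h - v).
Proof.
move=> v2; rewrite root_quad_poly -v2 -subr_eq0 subr_sqr mulf_eq0.
by rewrite subr_eq0 addr_eq0 !subr_eq addrC [iota h - v]addrC.
Qed.

Lemma inKerH_deg2 b :
  degK iota b = 2%N -> inKerH iota b <-> ~ inK iota b /\ inK iota (b ^+ 2).
Proof.
move=> deg2; split=> [[_ Hb0] | [bNK [c b2]]].
  have [bNK [c bc]] := degK2_square deg2.
  by split=> //; exists c; rewrite -bc Hb0 rmorph0 subr0.
have b02 : (b - iota 0) ^+ 2 = iota c by rewrite rmorph0 subr0.
have [deg2' Hb0] := degK_HK_quad bNK b02.
by split; rewrite // /regularK deg2'.
Qed.

Lemma conjugate_deg2 (alpha : F) (beta : L) :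
  inKerH iota beta -> degK iota (iota alpha + beta) = 2%N ->
  let lam := iota alpha + beta in
  [/\ kinv iota lam = iota alpha - beta,
      root (minpolyK iota lam)^i (kinv iota lam),
      kinv iota lam != lam &
      forall mu, root (minpolyK iota lam)^i mu -> mu = lam \/ mu = kinv iota lam].
Proof.
move=> [_ Hbeta0] deg2 lam.
have [lamNK [c lamc]] := degK2_square deg2.
have betaNK : ~ inK iota beta.
  by case=> a beta_a; apply: lamNK; exists (alpha + a); rewrite /lam beta_a rmorphD.
have [_ Hbeta] : degK iota beta = 2%N /\ HK iota beta = HK iota lam - alpha.
  by apply: (degK_HK_quad (c := c) betaNK); rewrite -lamc rmorphB /lam; congr (_ ^+ 2); ring.
have Hlam : HK iota lam = alpha by apply/eqP; rewrite -subr_eq0 -Hbeta Hbeta0.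
have beta2 : beta ^+ 2 = iota c by rewrite -lamc Hlam /lam; congr (_ ^+ 2); ring.
have kinv_lam : kinv iota lam = iota alpha - beta by rewrite /kinv /VK Hlam /lam; ring.
have mu_lam : minpolyK iota lam = quad_poly alpha c by rewrite (minpolyK_quad lamNK lamc) Hlam.
split=> // [| | mu].
- by rewrite mu_lam (root_quad_polyP _ _ beta2) kinv_lam eqxx orbT.
- rewrite kinv_lam /lam -subr_eq0 opprD addrACA subrr add0r -opprD oppr_eq0.
  rewrite -mulr2n -mulr_natr mulf_eq0 negb_or -(rmorph_nat iota) fmorph_eq0 char_neq2 andbT.
  by apply: contra_not_neq betaNK => ->; exists 0; rewrite rmorph0.
- by rewrite mu_lam (root_quad_polyP _ _ beta2) kinv_lam => /orP[] /eqP->; [left | right].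
Qed.

Lemma inK_mul_kerH b b' : inKerH iota b -> inKerH iota b' ->
  degK iota b = 2%N -> degK iota b' = 2%N -> inK iota (b * b') <-> lin_dep2 iota b b'.
Proof.
move=> kerb kerb' /inKerH_deg2[/(_ kerb) [bNK [c b2]] _].
move=> /inKerH_deg2[/(_ kerb') [b'NK _] _].
have [b_neq0 b'_neq0] : b != 0 /\ b' != 0.
  by split; apply/eqP => b0; [apply: bNK | apply: b'NK]; rewrite b0; exists 0; rewrite rmorph0.
split=> [[k bb'] | [a [a' [aa'_neq0 dep]]]].
  exists k, (- c); split; last by rewrite rmorphN -b2 -bb'; ring.
  by left; rewrite -(fmorph_eq0 iota) -bb' mulf_neq0.
have a'_neq0 : iota a' != 0.
  rewrite fmorph_eq0; apply/eqP => a'0; move: dep; rewrite a'0 rmorph0 mul0r addr0.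
  move/eqP; rewrite mulf_eq0 fmorph_eq0 (negPf b_neq0) orbF => /eqP a0.
  by case: aa'_neq0; rewrite ?a0 ?a'0 eqxx.
have b'E : iota a' * b' = - (iota a * b) by rewrite -(subr0 (iota a' * b')) -dep; ring.
exists (- (a / a') * c); apply: (mulfI a'_neq0).
by rewrite mulrCA b'E !(rmorphM, rmorphN, fmorphV) -b2; field.
Qed.

Lemma mul_kerH_deg2 b b' : inKerH iota b -> inKerH iota b' ->
  degK iota b = 2%N -> degK iota b' = 2%N -> ~ lin_dep2 iota b b' ->
  degK iota (b * b') = 2%N /\ inKerH iota (b * b').
Proof.
move=> kerb kerb' deg2 deg2' indep.
have bb'NK : ~ inK iota (b * b') by move/(inK_mul_kerH kerb kerb' deg2 deg2').
have [_ [c b2]] := (inKerH_deg2 deg2).1 kerb.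
have [_ [c' b'2]] := (inKerH_deg2 deg2').1 kerb'.
have bb'2 : (b * b' - iota 0) ^+ 2 = iota (c * c').
  by rewrite rmorph0 subr0 exprMn b2 b'2 rmorphM.
have [deg2'' H0] := degK_HK_quad bb'NK bb'2.
by split; rewrite // /inKerH /regularK deg2''.
Qed.

Section QuadraticSubfield.
Variables (v : L) (c : F).
Hypotheses (vNK : ~ inK iota v) (v2 : v ^+ 2 = iota c).

Definition in_Kv (z : L) : Prop := exists a b : F, z = iota a + iota b * v.

Lemma Kv_coords_eq0 a b : iota a + iota b * v = 0 -> a = 0 /\ b = 0.
Proof.
move=> abv0; have [b0 | b_neq0] := eqVneq b 0.
  by move: abv0; rewrite b0 rmorph0 mul0r addr0 => /eqP; rewrite fmorph_eq0 => /eqP.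
have ib_neq0 : iota b != 0 by rewrite fmorph_eq0.
case: vNK; exists (- a / b); rewrite rmorphM rmorphN fmorphV.
by apply: (mulfI ib_neq0); rewrite -(subr0 (iota b * v)) -abv0; field.
Qed.

Lemma kinv_Kv a b : kinv iota (iota a + iota b * v) = iota a - iota b * v.
Proof.
have [-> | b_neq0] := eqVneq b 0; first by rewrite rmorph0 mul0r addr0 subr0 kinv_iota.
have zNK : ~ inK iota (iota a + iota b * v).
  case=> k abv; have := Kv_coords_eq0 (a := a - k) (b := b).
  rewrite rmorphB addrAC abv subrr => /(_ erefl) [_ b0].
  by rewrite b0 eqxx in b_neq0.
have za2 : (iota a + iota b * v - iota a) ^+ 2 = iota (b ^+ 2 * c).
  by rewrite rmorphM rmorphXn -v2; ring.
have [_ Hz] := degK_HK_quad zNK za2.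
by rewrite /kinv /VK Hz; ring.
Qed.

Lemma subfield_over_Kv : subfield_over iota in_Kv.
Proof.
split.
- by move=> a; exists a, 0; rewrite rmorph0 mul0r addr0.
- move=> _ _ [a [b ->]] [a' [b' ->]]; exists (a + a'), (b + b').
  by rewrite !rmorphD; ring.
- by move=> _ [a [b ->]]; exists (- a), (- b); rewrite !rmorphN; ring.
- move=> _ _ [a [b ->]] [a' [b' ->]]; exists (a * a' + b * b' * c), (a * b' + a' * b).
  by rewrite !(rmorphD, rmorphM) -v2; ring.
move=> _ [a [b ->]]; have [z0 | z_neq0] := eqVneq (iota a + iota b * v) 0.
  by rewrite z0 invr0; exists 0, 0; rewrite rmorph0 mul0r addr0.
pose N := a ^+ 2 - b ^+ 2 * c.
have normE : (iota a + iota b * v) * (iota a - iota b * v) = iota N.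
  by rewrite /N rmorphB rmorphXn rmorphM rmorphXn -v2; ring.
have iN_neq0 : iota N != 0.
  rewrite -normE mulf_neq0 //; apply/eqP => /(congr1 -%R); rewrite oppr0 opprB.
  have -> : iota b * v - iota a = iota (- a) + iota b * v by rewrite rmorphN addrC.
  move/Kv_coords_eq0 => [/eqP]; rewrite oppr_eq0 => /eqP a0 b0.
  by move: z_neq0; rewrite a0 b0 rmorph0 mul0r addr0 eqxx.
exists (a / N), (- b / N); apply: (mulfI z_neq0); rewrite mulfV //.
rewrite !(rmorphM, rmorphN, fmorphV) -normE; field.
by move: iN_neq0; rewrite -normE mulf_eq0 negb_or andbC.
Qed.

Lemma kinv_KvM x y : in_Kv x -> in_Kv y -> kinv iota (x * y) = kinv iota x * kinv iota y.
Proof.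
move=> [a [b ->]] [a' [b' ->]].
have -> : (iota a + iota b * v) * (iota a' + iota b' * v) =
          iota (a * a' + b * b' * c) + iota (a * b' + a' * b) * v.
  by rewrite !(rmorphD, rmorphM) -v2; ring.
by rewrite !kinv_Kv !(rmorphD, rmorphM) -v2; ring.
Qed.

End QuadraticSubfield.

Lemma kinv_gen1M lam x y : (degK iota lam <= 2)%N ->
  in_gen_field iota [:: lam] x -> in_gen_field iota [:: lam] y ->
  kinv iota (x * y) = kinv iota x * kinv iota y.
Proof.
move=> deg_lam; have := degK_gt0 lam.
case deg : (degK iota lam) deg_lam => [|[|[|]]] // _ _ genx geny.
  have lamK t : t \in [:: lam] -> inK iota t by rewrite inE => /eqP->; apply/degK_eq1.
  have [a ->] := genx _ subfield_over_inK lamK; have [b ->] := geny _ subfield_over_inK lamK.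
  by rewrite -rmorphM !kinv_iota rmorphM.
have [lamNK [c lamc]] := degK2_square deg.
set v := lam - _ in lamc.
have vNK : ~ inK iota v.
  by case=> k vk; apply: lamNK; exists (k + HK iota lam); rewrite rmorphD -vk subrK.
have lam_Kv t : t \in [:: lam] -> in_Kv v t.
  by rewrite inE => /eqP->; exists (HK iota lam), 1; rewrite rmorph1 mul1r addrC subrK.
have KvS := subfield_over_Kv vNK lamc.
exact: (kinv_KvM vNK lamc (genx _ KvS lam_Kv) (geny _ KvS lam_Kv)).
Qed.

Section ExtensionTrace.
Variables (E : fieldExtType F) (phi : {rmorphism E -> L}).
Hypothesis phiA : forall a, phi a%:A = iota a.

Section Coordinates.
Variables (n : nat) (f : E -> 'rV[F]_n.+1) (g : 'rV[F]_n.+1 -> E).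
Hypotheses (f_linear : linear f) (fK : cancel f g) (gK : cancel g f).
Local Notation regmx := (regmx f g).

Lemma char_poly_regmx e : exists2 k,
  char_poly (regmx e) = minpolyK iota (phi e) ^+ k & n.+1 = (k * degK iota (phi e))%N.
Proof.
set mu := minpolyK iota (phi e).
have mu_e : horner_mx (regmx e) mu = 0.
  rewrite horner_regmx //; suff -> : (map_poly (in_alg E) mu).[e] = 0 by rewrite rmorph0.
  apply: (fmorph_inj phi); rewrite rmorph0 -horner_map -map_poly_comp.
  by rewrite (eq_map_poly phiA); apply/eqP; apply: root_minpolyK.
have [|k chiE] := irreducible_pow_of_roots (char_poly_monic (regmx e))
  (minpolyK_monic (phi e)) (minpolyK_irreducible (phi e)).
  move=> z; rewrite map_char_poly -root_mxminpoly mxminpoly_map.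
  by apply: root_dvdp; rewrite dvdp_map mxminpoly_min.
exists k => //; have := size_exp mu k; rewrite -chiE size_char_poly /= /degK.
by rewrite mulnC.
Qed.

Lemma regularK_trace_regmx e : (n.+1%:R : F) != 0 ->
  regularK iota (phi e) /\ \tr (regmx e) = n.+1%:R * HK iota (phi e).
Proof.
move=> n_neq0; have [k chiE dimE] := char_poly_regmx e.
set mu := minpolyK iota (phi e) in chiE *; set d := degK iota (phi e) in dimE *.
have d_neq0 : d%:R != 0 :> F.
  by move: n_neq0; rewrite dimE natrM mulf_eq0 negb_or => /andP[].
split=> //; case: k => [|k] in chiE dimE; first by rewrite mul0n in dimE.
have trE : \tr (regmx e) = - subleading (char_poly (regmx e)).
  by rewrite /subleading size_char_poly /= (char_poly_trace (regmx e)) ?opprK.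
have muE : subleading mu = mu`_d.-1 by rewrite /subleading size_minpolyK.
rewrite trE chiE subleadingX ?minpolyK_monic ?size_minpolyK_gt1 //.
by rewrite dimE natrM /HK -/mu -/d muE; field.
Qed.

End Coordinates.

Lemma regularK_HKD_ext : (\dim {:E})%:R != 0 :> F ->
  (forall e, regularK iota (phi e)) /\
  (forall a b, HK iota (phi (a + b)) = HK iota (phi a) + HK iota (phi b)).
Proof.
(* The dimension is generalized so that it can be written n.+1, as horner_mx requires. *)
have basisE := vbasisP (fullv : {vspace E}); set B := vbasis _ in basisE.
move: (passmx.rVof B) (passmx.vecof B)
  (passmx.rVof_linear B) (passmx.rVofK basisE) (passmx.vecofK basisE).
case: (\dim {:E}) => [|n] f g f_linear fK gK n_neq0; first by rewrite eqxx in n_neq0.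
have regularK_trace := regularK_trace_regmx f_linear fK gK _ n_neq0.
split=> [e | a b]; first by case: (regularK_trace e).
apply: (mulfI n_neq0); rewrite mulrDr -!(proj2 (regularK_trace _)).
by rewrite rmorphD mxtraceD.
Qed.

End ExtensionTrace.

Record quad_tower := QuadTower {
  tower_field : fieldExtType F;
  tower_emb : {rmorphism tower_field -> L};
  tower_embA : forall a, tower_emb a%:A = iota a;
  tower_dim : exists m, \dim {:tower_field} = (2 ^ m)%N }.

Definition in_tower (T : quad_tower) (x : L) : Prop := exists e, tower_emb T e = x.

Definition iota_regular : {rmorphism F^o -> L} := iota.

Fact iota_regularA a : iota_regular a%:A = iota a.
Proof. by rewrite /= [a%:A]mulr1. Qed.

Fact dim_regular : exists m, \dim {:F^o} = (2 ^ m)%N.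
Proof. by exists 0%N; rewrite dimvf. Qed.

Definition base_tower := QuadTower iota_regularA dim_regular.

Lemma subfield_over_tower T : subfield_over iota (in_tower T).
Proof.
split.
- by move=> a; exists a%:A; rewrite tower_embA.
- by move=> _ _ [a <-] [b <-]; exists (a + b); rewrite rmorphD.
- by move=> _ [a <-]; exists (- a); rewrite rmorphN.
- by move=> _ _ [a <-] [b <-]; exists (a * b); rewrite rmorphM.
- by move=> _ [a <-]; exists a^-1; rewrite fmorphV.
Qed.

Lemma adjoin_quad_tower T t (q : {poly tower_field T}) :
  irreducible_poly q -> size q = 3%N -> root (map_poly (tower_emb T) q) t ->
  exists T', (forall x, in_tower T x -> in_tower T' x) /\ in_tower T' t.
Proof.
move=> q_irr size_q qt; have q_neq0 := irredp_neq0 q_irr.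
pose E := baseFieldType (SubFieldExtType qt q_irr).
pose phi : {rmorphism E -> L} := subfx_inj.
have phiA a : phi a%:A = iota a.
  by rewrite /phi /= baseField_scaleE (subfx_injZ qt q_neq0) rmorph1 mulr1 tower_embA.
have dimE : exists m, \dim {:E} = (2 ^ m)%N.
  have [m dimT] := tower_dim T; exists m.+1.
  have -> : (fullv : {vspace E}) = baseVspace fullv.
    by apply/vspaceP => x; rewrite mem_baseVspace; apply/idP/idP => _; apply: memvf.
  by rewrite dim_baseVspace dimT dimvf /= /dim /= size_q expnS mulnC.
exists (QuadTower phiA dimE); split; last first.
  by exists (subfx_root _ t q : E); apply: subfx_inj_root qt q_neq0.
by move=> _ [e <-]; exists ((e%:A : SubFieldExtType qt q_irr) : E); apply: subfx_inj_base.
Qed.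

Lemma adjoin_deg2_tower T t : (degK iota t <= 2)%N ->
  exists T', (forall x, in_tower T x -> in_tower T' x) /\ in_tower T' t.
Proof.
move=> deg_t; have [tT | tNT] := classic (in_tower T t); first by exists T.
have tNK : ~ inK iota t by case=> a ta; apply: tNT; exists a%:A; rewrite tower_embA ta.
have deg2 : degK iota t = 2%N.
  by move: deg_t (degK_gt0 t) (contra_not (degK_eq1 t).1 tNK); lia.
have [_ [c tc]] := degK2_square deg2; set h := HK iota t in tc.
pose q := map_poly (in_alg (tower_field T)) (quad_poly h c).
have qE : map_poly (tower_emb T) q = map_poly iota (quad_poly h c).
  by rewrite -map_poly_comp; apply: eq_map_poly; apply: tower_embA.
have q_roots y : root (map_poly (tower_emb T) q) y = (y == t) || (y == iota h *+ 2 - t).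
  rewrite qE (root_quad_polyP h y tc) addrC subrK; congr (_ || _).
  by apply/eqP/eqP => ->; ring.
apply: (adjoin_quad_tower (q := q)); last by rewrite q_roots eqxx.
  apply: cubic_irreducible; first by rewrite size_map_poly size_quad_poly.
  move=> r; apply/negP => /(rmorph_root (tower_emb T)).
  rewrite q_roots => /orP[] /eqP rE; apply: tNT; first by exists r.
  exists ((h *+ 2)%:A - r); rewrite rmorphB tower_embA rE rmorphMn; ring.
by rewrite size_map_poly size_quad_poly.
Qed.

Lemma tower_of_deg2 (ts : seq L) : (forall t, t \in ts -> (degK iota t <= 2)%N) ->
  exists T, forall t, t \in ts -> in_tower T t.
Proof.
elim: ts => [|t ts IHts] deg_ts; first by exists base_tower.
have [|T tsT] := IHts; first by move=> u u_ts; rewrite deg_ts // inE u_ts orbT.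
have [T' [TT' tT']] := adjoin_deg2_tower T (deg_ts t (mem_head t ts)).
by exists T' => u; rewrite inE => /orP[/eqP-> // | /tsT/TT'].
Qed.

Lemma gen_field_deg2 (ts : seq L) : (forall t, t \in ts -> (degK iota t <= 2)%N) ->
  (forall x, in_gen_field iota ts x -> regularK iota x) /\
  kinv iota (\sum_(t <- ts) t) = \sum_(t <- ts) kinv iota t.
Proof.
move=> deg_ts; have [T tsT] := tower_of_deg2 deg_ts.
have dim_neq0 : (\dim {:tower_field T})%:R != 0 :> F.
  by have [m ->] := tower_dim T; rewrite natrX expf_neq0.
have [regT HKD] := regularK_HKD_ext (tower_embA T) dim_neq0.
split=> [x /(_ _ (subfield_over_tower T) tsT) [e <-] // | ].
rewrite !big_seq; apply: (proj2 (big_ind2 (fun x y => in_tower T x /\ kinv iota x = y) _ _ _)).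
- by split; [exists 0; rewrite rmorph0 | rewrite -(rmorph0 iota) kinv_iota].
- move=> _ _ _ _ [[a <-] <-] [[b <-] <-]; split; first by exists (a + b); rewrite rmorphD.
  by rewrite /kinv /VK -rmorphD HKD rmorphD; ring.
- by move=> t /tsT tT.
Qed.

End AlgebraicClosure.

Theorem proposition1p12 (F : fieldType) (L : closedFieldType)
    (iota : {rmorphism F -> L})
    (Lalg : forall x : L, exists p : {poly F}, p != 0 /\ root (map_poly iota p) x)
    (char2 : (2%:R : F) != 0) :
  (* (a) *)
  (forall (alpha : F) (beta : L),
     inKerH iota beta -> degK iota (iota alpha + beta) = 2%N ->
     let lam := iota alpha + beta in
     [/\ kinv iota lam = iota alpha - beta,
         root (map_poly iota (minpolyK iota lam)) (kinv iota lam),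
         kinv iota lam != lam &
         forall mu : L, root (map_poly iota (minpolyK iota lam)) mu ->
           mu = lam \/ mu = kinv iota lam]) /\
  (* (b) *)
  (forall ts : seq L, (forall t, t \in ts -> (degK iota t <= 2)%N) ->
     (forall x, in_gen_field iota ts x -> regularK iota x) /\
     kinv iota (\sum_(t <- ts) t) = \sum_(t <- ts) kinv iota t) /\
  (* (c) *)
  (forall lam : L, (degK iota lam <= 2)%N ->
     forall x y : L, in_gen_field iota [:: lam] x -> in_gen_field iota [:: lam] y ->
       kinv iota (x * y) = kinv iota x * kinv iota y) /\
  (* (d) *)
  (forall b b' : L, inKerH iota b -> inKerH iota b' ->
     degK iota b = 2%N -> degK iota b' = 2%N ->
     (inK iota (b * b') <-> lin_dep2 iota b b') /\
     (~ lin_dep2 iota b b' -> degK iota (b * b') = 2%N /\ inKerH iota (b * b'))) /\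
  (* (e) *)
  (forall b : L, degK iota b = 2%N ->
     (inKerH iota b <-> ~ inK iota b /\ inK iota (b ^+ 2))).
Proof.
split; first exact: conjugate_deg2.
split; first exact: gen_field_deg2.
split; first by move=> lam deg_lam x y; apply: kinv_gen1M.
split; last exact: inKerH_deg2.
by move=> b b' *; split; [exact: inK_mul_kerH | exact: mul_kerH_deg2].
Qed.
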